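(* Let $\gamma$ be an orbit of the regularized planar two-center problem lying on a regular torus $\mathbb{T}$ with rotation number $W$. If $\gamma$ passes through collision points at two distinct times (i.e. $\gamma$ contains an orbit segment connecting two collisions), then $W$ is rational.
   Context: Fix $d>0$ and masses $m_1,m_2>0$ at $(-d,0)$ and $(d,0)$. A test particle moves with Hamiltonian $H=\tfrac12(p_x^2+p_y^2)-m_1/\sqrt{(x+d)^2+y^2}-m_2/\sqrt{(x-d)^2+y^2}$; energies $h<0$. Regularization: $(\lambda,\nu)\in\mathbb{R}\times(\mathbb{R}/2\pi\mathbb{Z})$ with $x+iy=d\sin(\nu+i\lambda)$ (a double cover branched over the centers), conjugate momenta $p_\lambda,p_\nu$, time change $dt=d^2(\cosh^2\lambda-\sin^2\nu)\,d\tau$. On $H=h$ the motion becomes the flow (time $\tau$, defined also through collisions) of $H_\lambda+H_\nu$ on its zero level, $H_\lambda=\tfrac12p_\lambda^2-d(m_1+m_2)\cosh\lambda-hd^2\cosh^2\lambda$, $H_\nu=\tfrac12p_\nu^2+d(m_1-m_2)\sin\nu+hd^2\sin^2\nu$; orbits lie in sets $\{H_\lambda=-g,\ H_\nu=g\}$ for a separation constant $g$. Regular torus: a compact connected component $\mathbb{T}=C_\lambda\times C_\nu$ of such a set with $-g$ a regular value of $H_\lambda$ and $g$ a regular value of $H_\nu$ ($C_\lambda$ a closed curve in the $(\lambda,p_\lambda)$-plane, $C_\nu$ a closed curve in the cylinder $(\mathbb{R}/2\pi\mathbb{Z})\times\mathbb{R}$). Rotation number $W=T_\nu/T_\lambda$,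 where $T_\lambda,T_\nu$ are the $\tau$-periods of the motions on $C_\lambda,C_\nu$; in angle coordinates $\theta_1$ along $C_\nu$, $\theta_2$ along $C_\lambda$ (each in $\mathbb{R}/\mathbb{Z}$, increasing uniformly in $\tau$ with period 1) orbits on $\mathbb{T}$ lift to lines $\theta_2=W\theta_1+\mathrm{const}$. Collision points are the points of $\mathbb{T}$ with $\lambda=0$ and $\nu\equiv\pm\pi/2 \pmod{2\pi}$ (they project to the two centers). *)

From HB Require Import structures.
From mathcomp Require Import all_boot all_order all_algebra.
From mathcomp Require Import all_classical all_reals all_analysis.
Set Implicit Arguments. Unset Strict Implicit. Unset Printing Implicit Defensive.
Import Order.TTheory GRing.Theory Num.Theory.
Import numFieldNormedType.Exports.
Local Open Scope classical_set_scope.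
Local Open Scope ring_scope.

Section TwoCenter.
Variable R : realType.

Definition coshR (x : R) : R := (expR x + expR (- x)) / 2.

Definition Hlam (d m1 m2 h : R) (l p : R) : R :=
  p ^+ 2 / 2 - d * (m1 + m2) * coshR l - h * d ^+ 2 * (coshR l) ^+ 2.

Definition Hnu (d m1 m2 h : R) (n p : R) : R :=
  p ^+ 2 / 2 + d * (m1 - m2) * sin n + h * d ^+ 2 * (sin n) ^+ 2.

Definition regular_value (H : R -> R -> R) (c : R) : Prop :=
  forall x p, H x p = c ->
    derive1 (fun y => H y p) x != 0 \/ derive1 (fun q => H x q) p != 0.

(* embedding of the cylinder (R/2piZ) x R into R^3 *)
Definition cyl (x : R * R) : R * R * R := (cos x.1, sin x.1, x.2).

(* (lam, plam, nu, pnu) is an orbit (time tau) of the flow of Hlam + Hnu;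
   nu is a real lift of the angle nu in R/2piZ *)
Definition is_orbit (d m1 m2 h : R) (lam plam nu pnu : R -> R) : Prop :=
  forall t,
    [/\ derivable lam t 1, derivable plam t 1, derivable nu t 1,
        derivable pnu t 1 &
     [/\ derive1 lam t = derive1 (fun q => Hlam d m1 m2 h (lam t) q) (plam t),
         derive1 plam t = - derive1 (fun y => Hlam d m1 m2 h y (plam t)) (lam t),
         derive1 nu t = derive1 (fun q => Hnu d m1 m2 h (nu t) q) (pnu t) &
         derive1 pnu t = - derive1 (fun y => Hnu d m1 m2 h y (pnu t)) (nu t)]].

Definition min_period (X : Type) (f : R -> X) (T : R) : Prop :=
  [/\ 0 < T, (forall t, f (t + T) = f t) &
      forall T', 0 < T' < T -> ~ (forall t, f (t + T') = f t)].

Definition collision (lam nu : R -> R) (t : R) : Prop :=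
  lam t = 0 /\ exists k : int,
    nu t = pi / 2 + k%:~R * (2 * pi) \/ nu t = - (pi / 2) + k%:~R * (2 * pi).

End TwoCenter.

(* Both separated motions are Newton equations x'' = F x with F locally
   Lipschitz, so their solutions are determined by initial data. F_lam is odd
   and F_nu is antisymmetric about +-pi/2, so a solution passing through
   lam = 0 (resp. nu = +-pi/2 mod 2pi) is symmetric under time reversal about
   that instant. An orbit colliding at t1 <> t2 is symmetric about both times;
   composing the two reflections shows that 2 (t2 - t1) is a period of both
   motions, hence an integer multiple of T_lam and of T_nu, and W is rational. *)

From HB Require Import structures.
From mathcomp Require Import all_boot all_order all_algebra.
From mathcomp Require Import all_classical all_reals all_analysis.
From mathcomp Require Import ring lra.
Import Order.TTheory GRing.Theory Num.Theory.
Import numFieldNormedType.Exports.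
Local Open Scope classical_set_scope.
Local Open Scope ring_scope.
Set Implicit Arguments. Unset Strict Implicit.

Section LocallyLipschitz.
Variable R : realType.

Lemma derivable_continuous (f : R -> R) : (forall x, derivable f x 1) -> continuous f.
Proof. by move=> df x; apply/differentiable_continuous/derivable1_diffP. Qed.

Lemma continuous_of_is_derive (f df : R -> R) :
  (forall x, is_derive x (1 : R) f (df x)) -> continuous f.
Proof. by move=> df_f; apply: derivable_continuous => x; case: (df_f x). Qed.

Lemma bounded_on_segment (f : R -> R) (a b : R) : continuous f ->
  exists B, forall t, t \in `[a, b] -> `|f t| <= B.
Proof.
move=> cf; case: (leP a b) => [ab|ba]; last first.
  by exists 0 => t; rewrite in_itv /= => /andP[aT /(le_trans aT)]; rewrite leNgt ba.
have cnf : {within `[a, b], continuous (fun t => `|f t|)}.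
  by apply: continuous_subspaceT => t; exact: (continuous_comp (cf t) (@norm_continuous _ _ _)).
by have [c _ cmax] := EVT_max ab cnf; exists `|f c|.
Qed.

Definition locally_lipschitz (F : R -> R) := forall B : R, exists K : R, 0 <= K /\
  forall a b, `|a| <= B -> `|b| <= B -> `|F a - F b| <= K * `|a - b|.

Lemma lipschitz_of_derive_bounded (F F' : R -> R) (B K : R) :
  (forall x, is_derive x (1 : R) F (F' x)) ->
  (forall x, `|x| <= B -> `|F' x| <= K) ->
  forall a b, `|a| <= B -> `|b| <= B -> `|F a - F b| <= K * `|a - b|.
Proof.
move=> dF bF.
have lip_le a b : a <= b -> `|a| <= B -> `|b| <= B -> `|F a - F b| <= K * `|a - b|.
  move=> ab ha hb.
  have [c cab E] := MVT_segment ab (fun x _ => dF x)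
     (continuous_subspaceT (continuous_of_is_derive dF)).
  rewrite distrC E [`|a - b|]distrC normrM ler_wpM2r // bF //.
  move: cab; rewrite in_itv /= => /andP[ac cb].
  rewrite ler_norml (le_trans cb (le_trans (ler_norm b) hb)) andbT.
  by apply: le_trans ac; rewrite lerNl (le_trans _ ha) // -normrN ler_norm.
move=> a b ha hb; case: (leP a b) => ab; first exact: lip_le.
by rewrite distrC (distrC a); apply: lip_le => //; rewrite ltW.
Qed.

Lemma locally_lipschitz_of_derive (F F' : R -> R) :
  (forall x, is_derive x (1 : R) F (F' x)) -> (forall x, derivable F' x 1) ->
  locally_lipschitz F.
Proof.
move=> dF dF' B.
have [K HK] := bounded_on_segment (- `|B|) `|B| (derivable_continuous dF').
exists (Num.max K 0); split; first by rewrite le_max lexx orbT.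
apply: (lipschitz_of_derive_bounded dF) => x xB.
rewrite le_max HK //= in_itv /= -ler_norml.
by rewrite (le_trans xB) // ler_norm.
Qed.

End LocallyLipschitz.

Section NewtonEquation.
Variable R : realType.

Definition solves_newton (F x y : R -> R) :=
  (forall t, is_derive t (1 : R) x (y t)) /\ (forall t, is_derive t (1 : R) y (F (x t))).

Lemma cross_terms_le_sqr_sum (a b c K : R) : 0 <= K -> `|c| <= K * `|a| ->
  2 * a * b + 2 * b * c <= (1 + K) * (a ^+ 2 + b ^+ 2).
Proof.
move=> K0 hc.
have bc : b * c <= `|b| * (K * `|a|).
  by rewrite (le_trans (ler_norm _)) // normrM ler_wpM2l.
have ab := mulr_ge0 K0 (sqr_ge0 (`|a| - `|b|)).
have := sqr_ge0 (a - b).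
have := real_normK (num_real a); have := real_normK (num_real b).
nra.
Qed.

Lemma newton_unique_fwd (F x1 y1 x2 y2 : R -> R) (t0 T : R) :
  locally_lipschitz F -> solves_newton F x1 y1 -> solves_newton F x2 y2 ->
  x1 t0 = x2 t0 -> y1 t0 = y2 t0 -> t0 <= T -> x1 T = x2 T /\ y1 T = y2 T.
Proof.
move=> LF [dx1 dy1] [dx2 dy2] ex ey t0T.
have [B1 hB1] := bounded_on_segment t0 T (continuous_of_is_derive dx1).
have [B2 hB2] := bounded_on_segment t0 T (continuous_of_is_derive dx2).
have [K [K0 HK]] := LF (Num.max B1 B2).
(* Gronwall: the squared distance damped by exp(-(1+K)t) is nonincreasing *)
pose g t := ((x1 t - x2 t) ^+ 2 + (y1 t - y2 t) ^+ 2) * expR (- (1 + K) * t).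
pose dg t := expR (- (1 + K) * t) * (2 * (x1 t - x2 t) * (y1 t - y2 t)
   + 2 * (y1 t - y2 t) * (F (x1 t) - F (x2 t))
   - (1 + K) * ((x1 t - x2 t) ^+ 2 + (y1 t - y2 t) ^+ 2)).
have g_derive t : is_derive t (1 : R) g (dg t).
  by apply: is_derive_eq; rewrite /dg [in LHS]/GRing.scale /=; ring.
have dg_le0 t : t \in `]t0, T[ -> dg t <= 0.
  rewrite in_itv /= => /andP[/ltW t0t /ltW tT].
  have tin : t \in `[t0, T] by rewrite in_itv /= t0t tT.
  rewrite /dg pmulr_rle0 ?expR_gt0 // subr_le0 cross_terms_le_sqr_sum //.
  by apply: HK; rewrite le_max ?(hB1 _ tin) ?(hB2 _ tin) ?orbT.
have gT_le : g T <= g t0.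
  apply: (ler0_derive1_le_cc (f := g) (a := t0) (b := T)) => //.
  - by move=> t tin; rewrite derive1E derive_val dg_le0.
  - exact/continuous_subspaceT/(continuous_of_is_derive g_derive).
  - by rewrite in_itv /= t0T lexx.
  - by rewrite in_itv /= t0T lexx.
have : g T <= 0 by rewrite (le_trans gT_le) // /g ex ey !subrr expr0n /= addr0 mul0r.
rewrite /g pmulr_lle0 ?expR_gt0 // => gT0.
have /eqP : (x1 T - x2 T) ^+ 2 + (y1 T - y2 T) ^+ 2 = 0.
  by apply/le_anti; rewrite gT0 addr_ge0 ?sqr_ge0.
by rewrite paddr_eq0 ?sqr_ge0 // !sqrf_eq0 !subr_eq0 => /andP[/eqP -> /eqP ->].
Qed.

Lemma is_derive_reflect (f : R -> R) (a t df : R) :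
  is_derive (a - t) (1 : R) f df -> is_derive t (1 : R) (fun s => f (a - s)) (- df).
Proof.
move=> df_f.
have dA : is_derive t (1 : R) (fun s : R => a - s) (-1).
  by apply: is_derive_eq; rewrite add0r mul1r.
by rewrite -mulrN1; exact: is_derive1_comp.
Qed.

Lemma solves_newton_reverse (F x y : R -> R) (a : R) : solves_newton F x y ->
  solves_newton F (fun s => x (a - s)) (fun s => - y (a - s)).
Proof.
move=> [dx dy]; split=> t; first exact: is_derive_reflect.
by rewrite -[F _]opprK; apply: is_deriveN; exact: is_derive_reflect.
Qed.

Lemma solves_newton_reflect (F x y : R -> R) (a c : R) :
  (forall z, F (c - z) = - F z) -> solves_newton F x y ->
  solves_newton F (fun s => c - x (a - s)) (fun s => y (a - s)).
Proof.
move=> Fc [dx dy]; split=> t; last by rewrite Fc; exact: is_derive_reflect.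
have := is_deriveB (is_derive_cst c t 1) (is_derive_reflect (dx (a - t))).
by rewrite sub0r opprK.
Qed.

Lemma newton_unique (F x1 y1 x2 y2 : R -> R) (t0 : R) :
  locally_lipschitz F -> solves_newton F x1 y1 -> solves_newton F x2 y2 ->
  x1 t0 = x2 t0 -> y1 t0 = y2 t0 -> forall T, x1 T = x2 T /\ y1 T = y2 T.
Proof.
move=> LF s1 s2 ex ey T.
have [t0T|Tt0] := leP t0 T; first exact: newton_unique_fwd LF s1 s2 ex ey t0T.
have := newton_unique_fwd (t0 := - t0) (T := - T) LF
  (solves_newton_reverse 0 s1) (solves_newton_reverse 0 s2).
rewrite /= !sub0r !opprK ex ey lerN2 ltW // => /(_ erefl erefl erefl) [-> /eqP].
by rewrite eqr_opp => /eqP.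
Qed.

Lemma newton_reflect (F x y : R -> R) (c t1 : R) :
  locally_lipschitz F -> (forall z, F (c - z) = - F z) -> solves_newton F x y ->
  x t1 = c - x t1 -> forall s, x s = c - x (2 * t1 - s) /\ y s = y (2 * t1 - s).
Proof.
move=> LF Fc sxy xt1.
have e : 2 * t1 - t1 = t1 by ring.
by apply: (newton_unique (t0 := t1) LF sxy (solves_newton_reflect _ Fc sxy)); rewrite /= e.
Qed.

Lemma shift_of_two_reflections (x y : R -> R) (c1 c2 t1 t2 : R) :
  (forall s, x s = c1 - x (2 * t1 - s) /\ y s = y (2 * t1 - s)) ->
  (forall s, x s = c2 - x (2 * t2 - s) /\ y s = y (2 * t2 - s)) ->
  forall s, x (s + 2 * (t2 - t1)) = x s + (c2 - c1) /\ y (s + 2 * (t2 - t1)) = y s.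
Proof.
move=> r1 r2 s.
have e : 2 * t2 - (s + 2 * (t2 - t1)) = 2 * t1 - s by ring.
rewrite (r2 (s + _)).1 (r2 (s + _)).2 e (r1 s).2 [in RHS](r1 s).1.
by split=> //; ring.
Qed.

End NewtonEquation.

Section Periods.
Variable R : realType.

Lemma periodicz (X : Type) (f : R -> X) (T : R) : (forall t, f (t + T) = f t) ->
  forall (k : int) t, f (t + k%:~R * T) = f t.
Proof.
move=> fT.
have fnT (n : nat) t : f (t + n%:R * T) = f t.
  elim: n t => [|n IH] t; first by rewrite mul0r addr0.
  by rewrite -addn1 natrD mulrDl mul1r addrA fT IH.
case=> n t; first exact: fnT.
by rewrite NegzE intrN mulNr -(fnT n.+1 (t - n.+1%:R * T)) subrK.
Qed.

Lemma min_period_dvd_pos (X : Type) (f : R -> X) (T P : R) : min_period f T ->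
  0 < P -> (forall t, f (t + P) = f t) -> exists n : int, P = n%:~R * T.
Proof.
move=> [T0 fT Tmin] P0 fP; set n := Num.floor (P / T); exists n.
have nT_le : n%:~R * T <= P by rewrite -ler_pdivlMr // real_floor_le ?num_real.
have lt_nT : P < n%:~R * T + T.
  by rewrite -[X in _ + X]mul1r -mulrDl -ltr_pdivrMr // -intrD1 real_floorD1_gt ?num_real.
have frem t : f (t + (P - n%:~R * T)) = f t.
  by rewrite -(periodicz fT n (t + (P - n%:~R * T))) addrA subrK fP.
apply/eqP; rewrite -subr_eq0; apply/contraT => rem0; exfalso.
apply: (Tmin _ _ frem).
rewrite lt_def rem0 subr_ge0 nT_le /=; lra.
Qed.

Lemma min_period_dvd (X : Type) (f : R -> X) (T P : R) : min_period f T ->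
  (forall t, f (t + P) = f t) -> exists n : int, P = n%:~R * T.
Proof.
move=> fT fP; have [P0|P0|->] := ltgtP P 0; last by exists 0; rewrite mul0r.
  have fNP t : f (t + - P) = f t by rewrite -(fP (t - P)) subrK.
  have [|n eN] := min_period_dvd_pos fT _ fNP; first by rewrite oppr_gt0.
  by exists (- n); rewrite intrN mulNr -eN opprK.
exact: min_period_dvd_pos fT P0 fP.
Qed.

Lemma ratio_rat_of_common_multiple (T1 T2 P : R) (k n : int) :
  P != 0 -> P = k%:~R * T1 -> P = n%:~R * T2 -> exists r : rat, T2 / T1 = ratr r.
Proof.
move=> P0 eP1 eP2.
have T10 : T1 != 0 by apply: contraNneq P0 => T10; rewrite eP1 T10 mulr0.
have n0 : n%:~R != 0 :> R by apply: contraNneq P0 => n0; rewrite eP2 n0 mul0r.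
exists (k%:Q / n%:Q); rewrite fmorph_div !rmorph_int.
by apply/eqP; rewrite eqr_div // mulrC -eP2 eP1 mulrC.
Qed.

End Periods.

Section TwoCenterFlow.
Variables (R : realType) (d m1 m2 h : R).

Definition sinhR (x : R) : R := (expR x - expR (- x)) / 2.

Lemma is_derive_coshR (x : R) : is_derive x (1 : R) (@coshR R) (sinhR x).
Proof.
by apply: is_derive_eq; rewrite /sinhR !scaler0 add0r /GRing.scale /=; ring.
Qed.

Lemma is_derive_sinhR (x : R) : is_derive x (1 : R) sinhR (coshR x).
Proof.
by apply: is_derive_eq; rewrite /coshR !scaler0 add0r /GRing.scale /=; ring.
Qed.

#[local] Existing Instances is_derive_coshR is_derive_sinhR.

Definition Flam (x : R) : R :=
  d * (m1 + m2) * sinhR x + 2 * h * d ^+ 2 * coshR x * sinhR x.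

Definition Fnu (x : R) : R :=
  - (d * (m1 - m2) * cos x + 2 * h * d ^+ 2 * sin x * cos x).

Lemma derive1_Hlam_p (l p : R) : derive1 (fun q => Hlam d m1 m2 h l q) p = p.
Proof.
by rewrite derive1E; apply: derive_val; apply: is_derive_eq; rewrite /GRing.scale /=; field.
Qed.

Lemma derive1_Hlam_l (l p : R) : derive1 (fun y => Hlam d m1 m2 h y p) l = - Flam l.
Proof.
by rewrite derive1E; apply: derive_val; apply: is_derive_eq; rewrite /Flam /GRing.scale /=; field.
Qed.

Lemma derive1_Hnu_p (n p : R) : derive1 (fun q => Hnu d m1 m2 h n q) p = p.
Proof.
by rewrite derive1E; apply: derive_val; apply: is_derive_eq; rewrite /GRing.scale /=; field.
Qed.

Lemma derive1_Hnu_l (n p : R) : derive1 (fun y => Hnu d m1 m2 h y p) n = - Fnu n.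
Proof.
by rewrite derive1E; apply: derive_val; apply: is_derive_eq; rewrite /Fnu /GRing.scale /=; field.
Qed.

Lemma solves_newton_of_orbit (lam plam nu pnu : R -> R) :
  is_orbit d m1 m2 h lam plam nu pnu ->
  solves_newton Flam lam plam /\ solves_newton Fnu nu pnu.
Proof.
have derivable_of (f : R -> R) (t v : R) :
    derivable f t 1 -> derive1 f t = v -> is_derive t (1 : R) f v.
  by move=> /derivableP ?; rewrite derive1E => <-.
move=> orb; split; split=> t; have [? ? ? ? [e1 e2 e3 e4]] := orb t.
- by apply: derivable_of; rewrite // e1 derive1_Hlam_p.
- by apply: derivable_of; rewrite // e2 derive1_Hlam_l opprK.
- by apply: derivable_of; rewrite // e3 derive1_Hnu_p.
- by apply: derivable_of; rewrite // e4 derive1_Hnu_l opprK.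
Qed.

Lemma locally_lipschitz_Flam : locally_lipschitz Flam.
Proof.
apply: (@locally_lipschitz_of_derive _ _
  (fun x => d * (m1 + m2) * coshR x + 2 * h * d ^+ 2 * (sinhR x ^+ 2 + coshR x ^+ 2))).
- by move=> x; apply: is_derive_eq; rewrite /Flam /GRing.scale /=; ring.
- by move=> x; exact: ex_derive.
Qed.

Lemma locally_lipschitz_Fnu : locally_lipschitz Fnu.
Proof.
apply: (@locally_lipschitz_of_derive _ _
  (fun x => d * (m1 - m2) * sin x - 2 * h * d ^+ 2 * (cos x ^+ 2 - sin x ^+ 2))).
- by move=> x; apply: is_derive_eq; rewrite /Fnu /GRing.scale /=; ring.
- by move=> x; exact: ex_derive.
Qed.

Lemma Flam_odd (z : R) : Flam (0 - z) = - Flam z.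
Proof. by rewrite sub0r /Flam /sinhR /coshR opprK; ring. Qed.

Lemma sin_add_int2pi (x : R) (k : int) : sin (x + k%:~R * (2 * pi)) = sin x.
Proof. by rewrite (periodicz _ k) // => t; rewrite mulr_natl sinD2pi. Qed.

Lemma cos_add_int2pi (x : R) (k : int) : cos (x + k%:~R * (2 * pi)) = cos x.
Proof. by rewrite (periodicz _ k) // => t; rewrite mulr_natl cosD2pi. Qed.

Lemma Fnu_reflect (j : int) (z : R) : Fnu (pi + j%:~R * (2 * pi) - z) = - Fnu z.
Proof.
rewrite addrAC /Fnu sin_add_int2pi cos_add_int2pi cosB sinB cospi sinpi.
ring.
Qed.

End TwoCenterFlow.

Section Collisions.
Variable R : realType.

Lemma collision_reflection_point (lam nu : R -> R) (t : R) : collision lam nu t ->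
  lam t = 0 - lam t /\ exists j : int, nu t = pi + j%:~R * (2 * pi) - nu t.
Proof.
move=> [l0 [k [e|e]]]; split; rewrite ?l0 ?subrr //.
  by exists (2 * k); rewrite e intrM; field.
by exists (2 * k - 1); rewrite e intrB intrM; field.
Qed.

Lemma cyl_add_int2pi (x p : R) (k : int) : cyl (x + k%:~R * (2 * pi), p) = cyl (x, p).
Proof. by rewrite /cyl /= sin_add_int2pi cos_add_int2pi. Qed.

End Collisions.

Unset Implicit Arguments.
Set Strict Implicit.

Theorem corollary3 (R : realType) (d m1 m2 h g : R)
  (lam plam nu pnu : R -> R) (Tlam Tnu : R) :
  0 < d -> 0 < m1 -> 0 < m2 -> h < 0 ->
  is_orbit d m1 m2 h lam plam nu pnu ->
  (* the orbit lies on the set {H_lam = -g, H_nu = g} *)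
  Hlam d m1 m2 h (lam 0) (plam 0) = - g ->
  Hnu d m1 m2 h (nu 0) (pnu 0) = g ->
  (* regular torus T = C_lam x C_nu *)
  regular_value (Hlam d m1 m2 h) (- g) ->
  regular_value (Hnu d m1 m2 h) g ->
  compact (connected_component
             [set x : R * R | Hlam d m1 m2 h x.1 x.2 = - g] (lam 0, plam 0)) ->
  compact (connected_component
             (@cyl R @` [set x : R * R | Hnu d m1 m2 h x.1 x.2 = g])
             (cyl (nu 0, pnu 0))) ->
  (* tau-periods of the motions on C_lam and C_nu *)
  min_period (fun t => (lam t, plam t)) Tlam ->
  min_period (fun t => cyl (nu t, pnu t)) Tnu ->
  (* collisions at two distinct times *)
  (exists t1 t2, t1 != t2 /\ collision lam nu t1 /\ collision lam nu t2) ->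
  (* rotation number W = Tnu / Tlam is rational *)
  exists r : rat, Tnu / Tlam = ratr r.
Proof.
move=> _ _ _ _ orb _ _ _ _ _ _ Tlam_min Tnu_min [t1 [t2 [t12 [c1 c2]]]].
have [lam_sol nu_sol] := solves_newton_of_orbit orb.
have [l1 [j1 n1]] := collision_reflection_point c1.
have [l2 [j2 n2]] := collision_reflection_point c2.
have LFlam := locally_lipschitz_Flam d m1 m2 h.
have LFnu := locally_lipschitz_Fnu d m1 m2 h.
have rl1 := newton_reflect LFlam (@Flam_odd R d m1 m2 h) lam_sol l1.
have rl2 := newton_reflect LFlam (@Flam_odd R d m1 m2 h) lam_sol l2.
have rn1 := newton_reflect LFnu (@Fnu_reflect R d m1 m2 h j1) nu_sol n1.
have rn2 := newton_reflect LFnu (@Fnu_reflect R d m1 m2 h j2) nu_sol n2.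
set P := 2 * (t2 - t1).
have P0 : P != 0 by rewrite mulf_neq0 ?pnatr_eq0 // subr_eq0 eq_sym.
have lam_per s : (lam (s + P), plam (s + P)) = (lam s, plam s).
  by have [-> ->] := shift_of_two_reflections rl1 rl2 s; rewrite subrr addr0.
have nu_per s : cyl (nu (s + P), pnu (s + P)) = cyl (nu s, pnu s).
  have [-> ->] := shift_of_two_reflections rn1 rn2 s.
  have -> : pi + j2%:~R * (2 * pi) - (pi + j1%:~R * (2 * pi)) = (j2 - j1)%:~R * (2 * pi) :> R.
    by rewrite intrB; ring.
  exact: cyl_add_int2pi.
have [k ek] := min_period_dvd Tlam_min lam_per.
have [n en] := min_period_dvd Tnu_min nu_per.
exact: ratio_rat_of_common_multiple P0 ek en.
Qed.
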